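(* The space $\widetilde{l_1}$ has the Schur property, i.e., every weakly null sequence in $\widetilde{l_1}$ converges to $0$ in norm.
   Context: For a real sequence $a=(a_n)_{n\ge1}$ let $\widetilde{a_n}=\sup_{k\ge n}|a_k|$. The Tandori sequence space $\widetilde{l_1}$ is the space of sequences $a$ with $\|a\|_{\widetilde{l_1}}=\sum_{n=1}^\infty\widetilde{a_n}<\infty$. *)

From HB Require Import structures.
From mathcomp Require Import all_boot all_order all_algebra.
From mathcomp Require Import all_classical all_reals all_analysis.
Set Implicit Arguments. Unset Strict Implicit. Unset Printing Implicit Defensive.
Import Order.TTheory GRing.Theory Num.Theory.
Local Open Scope classical_set_scope.
Local Open Scope ring_scope.
Local Open Scope ereal_scope.

Definition tilde (R : realType) (a : nat -> R) (n : nat) : \bar R :=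
  ereal_sup [set (`|a k|)%:E | k in [set k : nat | (n <= k)%N]].

(* ||a|| = sum_{n>=1} tilde a n  (indices shifted to start at 0) *)
Definition tnorm (R : realType) (a : nat -> R) : \bar R :=
  \sum_(0 <= n <oo) tilde a n.

Definition in_tl1 (R : realType) (a : nat -> R) : Prop := tnorm a < +oo.

(* continuous linear functionals on the Tandori space (elements of its dual):
   only their values on the space matter *)
Definition tl1_dual (R : realType) (f : (nat -> R) -> R) : Prop :=
  (forall a b, in_tl1 a -> in_tl1 b -> f (fun k => (a k + b k)%R) = (f a + f b)%R) /\
  (forall (c : R) a, in_tl1 a -> f (fun k => (c * a k)%R) = (c * f a)%R) /\
  (exists C : R, forall a, in_tl1 a -> (`|f a|)%:E <= C%:E * tnorm a).

Definition weakly_null (R : realType) (x : nat -> nat -> R) : Prop :=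
  (forall j, in_tl1 (x j)) /\
  (forall f, tl1_dual f -> (fun j => f (x j)) @ \oo --> 0%R).

From HB Require Import structures.
From mathcomp Require Import all_boot all_order all_algebra.
From mathcomp Require Import all_classical all_reals all_analysis.
From mathcomp Require Import ring lra zify.
Set Implicit Arguments. Unset Strict Implicit. Unset Printing Implicit Defensive.
Import Order.TTheory GRing.Theory Num.Theory numFieldNormedType.Exports.
Local Open Scope classical_set_scope.
Local Open Scope ring_scope.

(* If the norms of a weakly null sequence do not tend to 0, a gliding hump
   argument extracts blocks 0 = t_0 < t_1 < ... and terms y_i = x_(j_i) with
   ||y_i|| >= eps, y_i small before 2 t_i, and the norm of y_i essentially
   carried by the tildes on [t_i, t_(i+1)).  For n in the i-th block let pi n
   be a position of the maximum of |y_i| on [n, t_(i+1)), so that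
   tilde y_i n <= |y_i (pi n)| + tilde y_i t_(i+1) and ||y_i|| is at most about
   twice the block sum of the |y_i (pi n)|.  As pi n >= n, the functional
   a |-> sum_n sg(pi n) a_(pi n) is dominated by sum_n |a_(pi n)| <=
   sum_n tilde a_n, so it is continuous; with the signs of y_i it is at least
   5 eps / 32 on every y_i, against weak nullity. *)

Section TandoriNorm.
Variable R : realType.
Implicit Types (a : nat -> R) (e : R).
Local Open Scope ereal_scope.

Lemma tilde_ge a n k : (n <= k)%N -> (`|a k|)%:E <= tilde a n.
Proof. by move=> nk; apply: ereal_sup_ubound; exists k. Qed.

Lemma tilde_ge0 a n : 0 <= tilde a n.
Proof. exact: le_trans (tilde_ge a (leqnn n)). Qed.

Lemma tilde_le a n (B : R) :
  (forall k, (n <= k)%N -> `|a k| <= B)%R -> tilde a n <= B%:E.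
Proof. by move=> aB; apply: ub_ereal_sup => _ [k /= nk <-]; rewrite lee_fin aB. Qed.

Lemma psum_tilde_le_tnorm a N : \sum_(0 <= n < N) tilde a n <= tnorm a.
Proof. by apply: nneseries_lim_ge => n _ _; exact: tilde_ge0. Qed.

Lemma tilde_le_tnorm a n : tilde a n <= tnorm a.
Proof.
apply: le_trans (psum_tilde_le_tnorm a n.+1).
by rewrite big_nat_recr //= leeDr // sume_ge0 // => i _; exact: tilde_ge0.
Qed.

Lemma tnorm_fin_num a : in_tl1 a -> tnorm a \is a fin_num.
Proof. by move=> aT; rewrite ge0_fin_numE // (le_trans (tilde_ge0 a 0)) ?tilde_le_tnorm. Qed.

Lemma tilde_fin_num a n : in_tl1 a -> tilde a n \is a fin_num.
Proof. by move=> aT; rewrite ge0_fin_numE ?tilde_ge0 // (le_lt_trans (tilde_le_tnorm a n)). Qed.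

Definition tilder a n : R := fine (tilde a n).
Definition tnormr a : R := fine (tnorm a).
Definition tpsum a N : R := (\sum_(0 <= n < N) tilder a n)%R.

Lemma tilderE a n : in_tl1 a -> (tilder a n)%:E = tilde a n.
Proof. by move=> aT; rewrite fineK // tilde_fin_num. Qed.

Lemma tnormrE a : in_tl1 a -> (tnormr a)%:E = tnorm a.
Proof. by move=> aT; rewrite fineK // tnorm_fin_num. Qed.

Lemma tpsumE a N : in_tl1 a -> (tpsum a N)%:E = \sum_(0 <= n < N) tilde a n.
Proof. by move=> aT; rewrite -sumEFin; apply: eq_bigr => n _; exact: tilderE. Qed.

Local Open Scope ring_scope.

Lemma tnormr_ge0 a : 0 <= tnormr a.
Proof. exact/fine_ge0/(le_trans (tilde_ge0 a 0))/tilde_le_tnorm. Qed.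

Variables (a : nat -> R).
Hypothesis aT : in_tl1 a.

Lemma tilder_ge n k : (n <= k)%N -> `|a k| <= tilder a n.
Proof. by move=> nk; rewrite -lee_fin tilderE // tilde_ge. Qed.

Lemma tilder_ge0 n : 0 <= tilder a n.
Proof. exact: le_trans (tilder_ge (leqnn n)). Qed.

Lemma tilder_le n (B : R) : (forall k, (n <= k)%N -> `|a k| <= B) -> tilder a n <= B.
Proof. by move=> aB; rewrite -lee_fin tilderE // tilde_le. Qed.

Lemma tilder_le_tilder n m : (n <= m)%N -> tilder a m <= tilder a n.
Proof. by move=> nm; apply: tilder_le => k mk; apply: tilder_ge; exact: leq_trans mk. Qed.

Lemma tpsum_le_tnormr N : tpsum a N <= tnormr a.
Proof. by rewrite -lee_fin tpsumE // tnormrE // psum_tilde_le_tnorm. Qed.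

Lemma tpsum_split m N : (m <= N)%N -> tpsum a N = tpsum a m + \sum_(m <= n < N) tilder a n.
Proof. by move=> mN; rewrite /tpsum (@big_cat_nat _ _ _ m 0 N). Qed.

Lemma tpsum_le_tpsum m N : (m <= N)%N -> tpsum a m <= tpsum a N.
Proof. by move=> mN; rewrite (tpsum_split mN) lerDl sumr_ge0 // => n _; exact: tilder_ge0. Qed.

Lemma tpsum_approx e : 0 < e -> exists m, tnormr a - tpsum a m <= e.
Proof.
move=> e0.
have tnormE : tnorm a = ereal_sup (range (fun N => \sum_(0 <= n < N) tilde a n)).
  apply: cvg_lim => //; apply: ereal_nondecreasing_cvgn.
  by apply: ereal_nondecreasing_series => n _ _; exact: tilde_ge0.
have := tnorm_fin_num aT; rewrite tnormE => /(ub_ereal_sup_adherent e0)[_ [m _ <-]].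
rewrite -tnormE -tnormrE // -tpsumE // -EFinB lte_fin => /ltW.
by exists m; rewrite lerBlDr -lerBlDl.
Qed.

Lemma tilder_tail_le m q : (m <= q)%N -> tilder a q *+ (q - m) <= tnormr a - tpsum a m.
Proof.
move=> mq; apply: (@le_trans _ _ (\sum_(m <= n < q) tilder a n)); last first.
  by have := tpsum_le_tnormr q; rewrite (tpsum_split mq); lra.
rewrite -sumr_const_nat big_nat_cond [X in _ <= X]big_nat_cond.
by apply: ler_sum => n /andP[/andP[_ nq] _]; apply: tilder_le_tilder; exact: ltnW.
Qed.

End TandoriNorm.

Section Multiplicity.
Variables (R : realType) (pi : nat -> nat).
Hypothesis pi_ge : forall n, (n <= pi n)%N.

(* Counting only [n <= k] loses nothing when [n <= pi n]: [mult k] is the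
   size of the fibre of [pi] over [k]. *)
Definition mult k : R := \sum_(0 <= n < k.+1) (pi n == k)%:R.

Lemma mult_ge0 k : 0 <= mult k.
Proof. by apply: sumr_ge0 => n _; rewrite ler0n. Qed.

Lemma multE k b : (k < b)%N -> mult k = \sum_(0 <= n < b) (pi n == k)%:R.
Proof.
move=> kb; rewrite (@big_cat_nat _ _ _ k.+1 0 b) //= [X in _ + X]big_nat_cond.
rewrite [X in _ + X]big1 ?addr0 //.
move=> n /andP[/andP[kn _] _]; case: eqP => // pin.
by move: (pi_ge n); rewrite pin leqNgt kn.
Qed.

Lemma sum_mult a b (h : nat -> R) : (forall n, (n < a)%N -> (pi n < a)%N) ->
  \sum_(a <= k < b) mult k * h k = \sum_(a <= n < b) (pi n < b)%:R * h (pi n).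
Proof.
move=> pi_lt; case: (leqP a b) => ab; last by rewrite !big_geq // ltnW.
have fibre n : \sum_(a <= k < b) (pi n == k)%:R * h k = (a <= pi n < b)%N%:R * h (pi n).
  rewrite (eq_bigr (fun k => if k == pi n then h k else 0)); last first.
    by move=> k _; rewrite eq_sym; case: eqP => [->|]; rewrite ?mul1r ?mul0r.
  by rewrite -big_mkcond big_nat1_eq; case: ifP; rewrite ?mul1r ?mul0r.
transitivity (\sum_(a <= k < b) \sum_(0 <= n < b) (pi n == k)%:R * h k).
  by apply: eq_big_nat => k /andP[_ kb]; rewrite (multE kb) mulr_suml.
rewrite exchange_big_nat /= (eq_bigr _ (fun n _ => fibre n)).
rewrite (@big_cat_nat _ _ _ a 0 b) //= [X in X + _]big_nat_cond big1 ?add0r.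
  apply: eq_big_nat => n /andP[an _]; by rewrite (leq_trans an (pi_ge n)).
by move=> n /andP[/andP[_ na] _]; rewrite leqNgt pi_lt ?mul0r.
Qed.

Lemma sum_mult_le a b (h : nat -> R) : (forall n, (n < a)%N -> (pi n < a)%N) ->
  (forall k, 0 <= h k) -> \sum_(a <= k < b) mult k * h k <= \sum_(a <= n < b) h (pi n).
Proof.
move=> pi_lt h_ge0; rewrite sum_mult //; apply: ler_sum => n _.
by case: (_ < _)%N; rewrite ?mul1r ?mul0r.
Qed.

Lemma sum_mult_eq a b (h : nat -> R) : (forall n, (n < a)%N -> (pi n < a)%N) ->
  (forall n, (a <= n)%N -> (n < b)%N -> (pi n < b)%N) ->
  \sum_(a <= k < b) mult k * h k = \sum_(a <= n < b) h (pi n).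
Proof.
move=> pi_lt pi_in; rewrite sum_mult //; apply: eq_big_nat => n /andP[an nb].
by rewrite pi_in ?mul1r.
Qed.

Variable sg : nat -> R.
Hypothesis sg_le1 : forall k, `|sg k| <= 1.

Lemma sum_abs_weight_le a b (y : nat -> R) : (forall n, (n < a)%N -> (pi n < a)%N) ->
  \sum_(a <= k < b) `|sg k * mult k * y k| <= \sum_(a <= n < b) `|y (pi n)|.
Proof.
move=> pi_lt; apply: le_trans (sum_mult_le b pi_lt (fun k => normr_ge0 (y k))).
apply: ler_sum => k _; rewrite !normrM (ger0_norm (mult_ge0 k)) -mulrA.
by apply: ler_piMl => //; rewrite mulr_ge0 ?mult_ge0.
Qed.

Definition weighted_sum (a : nat -> R) : R := limn (series (fun k => sg k * mult k * a k)).

Section WeightedSum.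
Variables (a : nat -> R).
Hypothesis aT : in_tl1 a.

Lemma sum_abs_weight_le_tnormr N : \sum_(0 <= k < N) `|sg k * mult k * a k| <= tnormr a.
Proof.
have pi_lt0 n : (n < 0)%N -> (pi n < 0)%N by [].
apply: le_trans (sum_abs_weight_le _ _ pi_lt0) _.
apply: le_trans (tpsum_le_tnormr aT N); apply: ler_sum => n _; exact: tilder_ge.
Qed.

Lemma weighted_series_cvg : cvgn (series (fun k => sg k * mult k * a k)).
Proof.
apply: normed_cvg; apply: nondecreasing_is_cvgn.
  by apply: nondecreasing_series => n _ _; exact: normr_ge0.
by exists (tnormr a) => _ [N _ <-]; exact: sum_abs_weight_le_tnormr.
Qed.

Lemma abs_weighted_sum_le : `|weighted_sum a| <= tnormr a.
Proof.
have partial_le N : `|series (fun k => sg k * mult k * a k) N| <= tnormr a.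
  exact: le_trans (ler_norm_sum _ _ _) (sum_abs_weight_le_tnormr N).
rewrite ler_norml; apply/andP; split.
  apply: limr_ge; first exact: weighted_series_cvg.
  by apply: nearW => N; have := partial_le N; rewrite ler_norml => /andP[].
apply: limr_le; first exact: weighted_series_cvg.
by apply: nearW => N; have := partial_le N; rewrite ler_norml => /andP[].
Qed.

End WeightedSum.

Lemma weighted_sum_dual : tl1_dual weighted_sum.
Proof.
split; [|split].
- move=> a b aT bT; rewrite /weighted_sum -limD; try exact: weighted_series_cvg.
  congr (lim (_ @ \oo)); apply: funext => n; rewrite /series /= [in RHS]/GRing.add /= -big_split /=.
  by apply: eq_bigr => k _; rewrite mulrDr.
- move=> c a aT; rewrite /weighted_sum -[RHS]limZl_tmp; last exact: weighted_series_cvg.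
  congr (lim (_ @ \oo)); apply: funext => n.
  rewrite /series /= -[RHS]/(c * \sum_(0 <= k < n) sg k * mult k * a k) mulr_sumr.
  by apply: eq_bigr => k _; rewrite mulrCA.
- by exists 1%R => a aT; rewrite mul1e -tnormrE // lee_fin abs_weighted_sum_le.
Qed.

End Multiplicity.

Arguments mult {R} pi k.

(* The constants are tuned so that [weighted_sum_ge_hump] leaves [5 * eps / 32]. *)
Definition hump (R : realType) (eps : R) (y : nat -> R) (t q : nat) : Prop :=
  [/\ eps <= tnormr y,
      forall k, (k < 2 * t)%N -> `|y k| <= eps / (8 * t.+1%:R) &
      exists m, [/\ q = (2 * m)%N, (2 * t < m)%N & tnormr y - tpsum y m <= eps / 16]].

Section Block.
Variables (R : realType) (y : nat -> R) (pi : nat -> nat) (t q : nat).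
Hypothesis yT : in_tl1 y.
Hypothesis pi_ge : forall n, (n <= pi n)%N.
Hypothesis pi_lt : forall n, (n < t)%N -> (pi n < t)%N.
Hypothesis pi_in : forall n, (t <= n)%N -> (n < q)%N -> (pi n < q)%N.
Hypothesis pi_max :
  forall n k, (t <= n)%N -> (n <= k)%N -> (k < q)%N -> `|y k| <= `|y (pi n)|.
Variable sg : nat -> R.
Hypothesis sg_le1 : forall k, `|sg k| <= 1.
Hypothesis sg_y : forall k, (t <= k)%N -> (k < q)%N -> sg k * y k = `|y k|.

Lemma tilder_le_max n : (t <= n)%N -> (n < q)%N -> tilder y n <= `|y (pi n)| + tilder y q.
Proof.
move=> tn nq; apply: tilder_le => // k nk; case: (ltnP k q) => kq.
  by have := pi_max tn nk kq; have := tilder_ge0 yT q; lra.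
by have := tilder_ge yT kq; have := normr_ge0 (y (pi n)); lra.
Qed.

Section Head.
Variable d : R.
Hypothesis d_ge0 : 0 <= d.
Hypothesis y_small : forall k, (k < 2 * t)%N -> `|y k| <= d.
Hypothesis t_lt_q : (2 * t < q)%N.

Lemma tpsum_le_head : tpsum y t <= (d + `|y (pi (2 * t)%N)| + tilder y q) *+ t.
Proof.
rewrite /tpsum -[X in _ *+ X]subn0 -sumr_const_nat; apply: ler_sum_nat => n /andP[_ nt].
apply: tilder_le => // k nk.
have := tilder_ge0 yT q; have := normr_ge0 (y (pi (2 * t)%N)); have := d_ge0.
case: (ltnP k (2 * t)) => k2t; first by have := y_small k2t; lra.
case: (ltnP k q) => kq; last by have := tilder_ge yT kq; lra.
by have := @pi_max (2 * t)%N k ltac:(lia) k2t kq; lra.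
Qed.

Lemma head_max_le : `|y (pi (2 * t)%N)| *+ t <= \sum_(t <= n < q) `|y (pi n)|.
Proof.
rewrite (@big_cat_nat _ _ _ (2 * t) t q) /=; [|lia|lia].
apply: le_trans (_ : _ <= \sum_(t <= n < 2 * t) `|y (pi n)|) _; last first.
  by rewrite lerDl sumr_ge0.
have tE : (2 * t - t)%N = t by lia.
rewrite -[X in _ *+ X]tE -sumr_const_nat; apply: ler_sum_nat => n /andP[tn n2t].
by apply: pi_max tn _ (pi_in _ _); [exact: leq_trans (ltnW n2t) (pi_ge _)|lia|].
Qed.

Lemma tnormr_le_block (e : R) m : q = (2 * m)%N -> tnormr y - tpsum y m <= e ->
  tnormr y <= 2 * \sum_(t <= n < q) `|y (pi n)| + t%:R * d + 3 * e.
Proof.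
move=> qE tail_le.
have mq : (m <= q)%N by lia.
have tq : (t <= q)%N by lia.
have norm_le : tnormr y <= tpsum y q + e by have := tpsum_le_tpsum yT mq; lra.
have mid_le : \sum_(t <= n < q) tilder y n <=
    \sum_(t <= n < q) `|y (pi n)| + tilder y q *+ (q - t).
  rewrite -sumr_const_nat -big_split; apply: ler_sum_nat => n /andP[tn nq].
  exact: tilder_le_max.
have tail_mass : tilder y q *+ q <= 2 * e.
  have qmE : q = ((q - m) + (q - m))%N by lia.
  have := tilder_tail_le yT mq => ?.
  by rewrite [X in _ *+ X]qmE mulrnDr; lra.
have tail_split : tilder y q *+ t + tilder y q *+ (q - t) = tilder y q *+ q.
  by rewrite -mulrnDr subnKC.
have := tpsum_le_head; have := head_max_le; rewrite (tpsum_split y tq) in norm_le.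
by rewrite !mulrnDl mulr_natl; lra.
Qed.

Lemma weighted_sum_ge_block (e : R) m : (m <= q)%N -> tnormr y - tpsum y m <= e ->
  \sum_(t <= n < q) `|y (pi n)| - t%:R * d - e <= weighted_sum pi sg y.
Proof.
move=> mq tail_le; have tq : (t <= q)%N by lia.
have part_ge a b (B : R) : (forall n, (n < a)%N -> (pi n < a)%N) ->
    \sum_(a <= n < b) `|y (pi n)| <= B -> - B <= \sum_(a <= k < b) sg k * mult pi k * y k.
  move=> pi_lt' sum_le.
  have := le_trans (ler_norm_sum _ _ _) (sum_abs_weight_le pi_ge sg_le1 b y pi_lt').
  by move=> /le_trans /(_ sum_le); rewrite ler_norml => /andP[].
apply: limr_ge; first exact: weighted_series_cvg.
exists q => // N /= qN.
rewrite /series /= (@big_cat_nat _ _ _ t 0 N) //=; last exact: leq_trans qN.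
rewrite (@big_cat_nat _ _ _ q t N) //=.
have block_eq : \sum_(t <= k < q) sg k * mult pi k * y k = \sum_(t <= n < q) `|y (pi n)|.
  rewrite -(sum_mult_eq pi_ge (fun k => `|y k|) pi_lt pi_in); apply: eq_big_nat => k /andP[tk kq].
  by rewrite -sg_y // mulrAC mulrC.
have head_ge : - (t%:R * d) <= \sum_(0 <= k < t) sg k * mult pi k * y k.
  apply: part_ge => //; rewrite mulr_natl -[X in _ *+ X]subn0 -sumr_const_nat.
  by apply: ler_sum_nat => n /andP[_ nt]; apply: y_small; have := pi_lt nt; lia.
have tail_ge : - e <= \sum_(q <= k < N) sg k * mult pi k * y k.
  apply: part_ge => [n nq|]; first by case: (ltnP n t) => [/pi_lt|tn]; [lia|exact: pi_in].
  apply: le_trans (_ : _ <= \sum_(q <= n < N) tilder y n) _.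
    by apply: ler_sum => n _; exact: tilder_ge.
  have := tpsum_split y qN; have := tpsum_le_tnormr yT N; have := tpsum_le_tpsum yT mq.
  lra.
lra.
Qed.

End Head.

Lemma weighted_sum_ge_hump (eps : R) : 0 < eps -> hump eps y t q ->
  5 * eps / 32 <= weighted_sum pi sg y.
Proof.
move=> eps_gt0 [norm_ge y_small [m [qE tm tail_le]]].
have d_ge0 : 0 <= eps / (8 * t.+1%:R) by rewrite divr_ge0 ?mulr_ge0 ?ltW.
have td_le : t%:R * (eps / (8 * t.+1%:R)) <= eps / 8.
  have tS_neq0 : t.+1%:R != 0 :> R by rewrite pnatr_eq0.
  have -> : eps / 8 = t.+1%:R * (eps / (8 * t.+1%:R)) by field.
  by rewrite ler_wpM2r // ler_nat.
have t_lt_q : (2 * t < q)%N by lia.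
have mq : (m <= q)%N by lia.
have := weighted_sum_ge_block d_ge0 y_small t_lt_q mq tail_le.
have := tnormr_le_block d_ge0 y_small t_lt_q qE tail_le.
(* [lra] can only use the nonlinear term [t%:R * d] as an atom *)
move: td_le; generalize (t%:R * (eps / (8 * t.+1%:R))) => td; lra.
Qed.

End Block.

Lemma argmax_nat (R : realDomainType) (h : nat -> R) n q : (n < q)%N ->
  exists2 k, (n <= k < q)%N & forall k', (n <= k' < q)%N -> h k' <= h k.
Proof.
elim: q => // q IH nq1; have [<-|nq] : n = q \/ (n < q)%N by lia.
  by exists n => [|k' nk']; rewrite ?leqnn ?ltnSn // (_ : k' = n) //; lia.
have [k /andP[nk kq] kmax] := IH nq.
have k'P k' : (n <= k' < q.+1)%N -> k' = q \/ (n <= k' < q)%N by lia.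
case: (leP (h q) (h k)) => hqk.
  by exists k => [|k' /k'P[->|]//]; [rewrite nk ltnS ltnW | exact: kmax].
exists q => [|k' /k'P[->|/kmax/le_trans]//]; last by apply; exact: ltW.
by rewrite ltnSn (ltnW nq).
Qed.

Section BlockIndex.
Variable t : nat -> nat.
Hypothesis t0 : t 0 = 0%N.
Hypothesis t_lt : forall i, (t i < t i.+1)%N.

Lemma block_index_mono : {mono t : i j / (i <= j)%N}.
Proof. exact: leq_mono (homo_ltn ltn_trans t_lt). Qed.

Lemma block_index : exists blk : nat -> nat, forall n b, (t b <= n < t b.+1)%N = (blk n == b).
Proof.
have blk_uniq n b b' : (t b <= n < t b.+1)%N -> (t b' <= n < t b'.+1)%N -> b = b'.
  have t_ltn := leqW_mono block_index_mono.
  move=> /andP[lb ub] /andP[lb' ub']; apply/eqP; rewrite eqn_leq.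
  by rewrite -ltnS -t_ltn (leq_ltn_trans lb ub') -ltnS -t_ltn (leq_ltn_trans lb' ub).
have blk_ex n : exists b, (t b <= n < t b.+1)%N.
  elim: n => [|n [b /andP[lb ub]]]; first by exists 0%N; move: (t_lt 0); rewrite t0 => ->.
  case: (ltnP n.+1 (t b.+1)) => nb; first by exists b; rewrite nb leqW.
  by exists b.+1; rewrite nb (leq_ltn_trans ub (t_lt _)).
have [blk blkP] := boolp.choice blk_ex.
exists blk => n b; apply/idP/eqP => [nb|<-]; last exact: blkP.
exact: blk_uniq (blkP n) nb.
Qed.

End BlockIndex.

Lemma coord_dual (R : realType) k : tl1_dual (fun a : nat -> R => a k).
Proof.
do 2!split => //; exists 1%R => a _.
by rewrite mul1e (le_trans _ (tilde_le_tnorm a 0)) // tilde_ge.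
Qed.

Section GlidingHump.
Variables (R : realType) (x : nat -> nat -> R).
Hypothesis x_tl1 : forall j, in_tl1 (x j).
Hypothesis x_weak : forall f, tl1_dual f -> (fun j => f (x j)) @ \oo --> 0.

Lemma coords_small u (d : R) : 0 < d ->
  exists M, forall j, (M <= j)%N -> forall k, (k < u)%N -> `|x j k| <= d.
Proof.
move=> d_gt0; elim: u => [|u [M1 small1]]; first by exists 0%N.
have /cvgr0_norm_le/(_ d d_gt0)[M2 _ small2] := x_weak (coord_dual R u).
exists (maxn M1 M2) => j; rewrite geq_max => /andP[M1j M2j] k; rewrite ltnS leq_eqVlt.
by case/orP => [/eqP ->|]; [exact: small2 | exact: small1].
Qed.

Variable eps : R.
Hypothesis eps_gt0 : 0 < eps.
Hypothesis x_large : forall M, exists2 j, (M <= j)%N & eps <= tnormr (x j).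

Lemma hump_exists (p : nat * nat) : exists r : nat * nat, (p.2 <= r.1)%N /\ hump eps (x r.1) p.1 r.2.
Proof.
case: p => t jl /=.
have d_gt0 : 0 < eps / (8 * t.+1%:R) by rewrite divr_gt0 ?mulr_gt0 ?ltr0n.
have [M small] := coords_small (2 * t) d_gt0.
have [j Mj large] := x_large (maxn M jl); rewrite geq_max in Mj; case/andP: Mj => Mj jlj.
have [m0 tail_le] : exists m, tnormr (x j) - tpsum (x j) m <= eps / 16.
  by apply: tpsum_approx => //; rewrite divr_gt0.
exists (j, (2 * maxn m0 (2 * t).+1)%N); split => //; split => //.
  by move=> k; exact: small.
exists (maxn m0 (2 * t).+1); split => //; first by rewrite leq_max ltnSn orbT.
by have := tpsum_le_tpsum (x_tl1 j) (leq_maxl m0 (2 * t).+1); lra.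
Qed.

Lemma hump_sequence : exists t j : nat -> nat,
  t 0 = 0%N /\ forall i, (i <= j i)%N /\ hump eps (x (j i)) (t i) (t i.+1).
Proof.
have [next nextP] := boolp.choice hump_exists.
(* the state after step [i] is [(t_i, j_(i-1) + 1)] *)
pose st i := iter i (fun p => ((next p).2, (next p).1.+1)) (0, 0)%N.
exists (fun i => (st i).1), (fun i => (next (st i)).1); split => // i.
have low_le i' : (i' <= (st i').2)%N.
  by elim: i' => //= i' IH; have [+ _] := nextP (st i'); lia.
by have [jl_le hump_i] := nextP (st i); split => //; exact: leq_trans (low_le i) jl_le.
Qed.

Lemma gliding_hump_contra : False.
Proof.
have [t [j [t0 humps]]] := hump_sequence.
have t_lt i : (t i < t i.+1)%N by have [_ [_ _ [m [-> ? _]]]] := humps i; lia.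
have t_mono := block_index_mono t_lt.
have t_ltn := leqW_mono t_mono.
have [blk blkP] := block_index t0 t_lt.
have blk_bounds n : (t (blk n) <= n < t (blk n).+1)%N by rewrite blkP.
pose y n := x (j (blk n)).
have pi_ex n : exists k, (n <= k < t (blk n).+1)%N /\
    forall k', (n <= k' < t (blk n).+1)%N -> `|y n k'| <= `|y n k|.
  have /andP[_ n_lt] := blk_bounds n.
  by have [k ? ?] := argmax_nat (fun k => `|y n k|) n_lt; exists k.
have [pi piP] := boolp.choice pi_ex.
pose sg k := Num.sg (y k k).
have pi_ge n : (n <= pi n)%N by case: (piP n) => /andP[].
have sg_le1 k : `|sg k| <= 1 by rewrite normr_sg; case: (_ != 0).
have weighted_ge i : 5 * eps / 32 <= weighted_sum pi sg (x (j i)).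
  have blk_eq n : (t i <= n < t i.+1)%N -> blk n = i by rewrite blkP => /eqP.
  apply: weighted_sum_ge_hump (humps i).2 => // [n n_lt|n tn nt|n k tn nk kt|k tk kt].
  - have [/andP[_ pi_lt] _] := piP n; have /andP[blk_le _] := blk_bounds n.
    have blk_lt : (blk n < i)%N by rewrite -t_ltn (leq_ltn_trans blk_le n_lt).
    by rewrite (leq_trans pi_lt) // t_mono.
  - by have [/andP[_]] := piP n; rewrite blk_eq ?tn.
  - have [_] := piP n; rewrite /y blk_eq; last lia.
    by apply; lia.
  - by rewrite /sg /y blk_eq ?tk // -normrEsg.
have bound_gt0 : 0 < 5 * eps / 32 by have := eps_gt0; lra.
have /cvgr0_norm_lt/(_ _ bound_gt0)[M _ small] := x_weak (weighted_sum_dual pi_ge sg_le1).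
have := small (j M) (humps M).1; have := weighted_ge M.
by have := ler_norm (weighted_sum pi sg (x (j M))); lra.
Qed.

End GlidingHump.

Lemma weakly_null_tnormr_small (R : realType) (x : nat -> nat -> R) (eps : R) :
  weakly_null x -> 0 < eps -> \forall j \near \oo, tnormr (x j) <= eps.
Proof.
move=> [x_tl1 x_weak] eps_gt0; apply: contrapT => not_small.
apply: (gliding_hump_contra x_tl1 x_weak eps_gt0) => M; apply: contrapT => not_large.
apply: not_small; exists M => // j /= Mj; rewrite leNgt; apply/negP => large.
by apply: not_large; exists j => //; exact: ltW.
Qed.

Local Open Scope ereal_scope.

Theorem theorem1 (R : realType) (x : nat -> nat -> R) :
  weakly_null x -> (fun j => tnorm (x j)) @ \oo --> 0.
Proof.
move=> x_null; have [x_tl1 _] := x_null.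
apply/fine_cvgP; split; first by apply: nearW => j; exact: tnorm_fin_num.
apply/cvgrPdist_le => e e_gt0.
apply: filterS (weakly_null_tnormr_small x_null e_gt0) => j small.
by rewrite sub0r normrN ger0_norm // tnormr_ge0.
Qed.
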